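(* Let $(X,S)$ be an association scheme of order $n>1$ and let $H$ be an $n\times n$ Hadamard matrix whose rows and columns are indexed by the elements of $X$. Then $(\widetilde{X}, S(H))$ is an association scheme, where $\widetilde X$ and $S(H)$ are as defined in the context.
   Context: An association scheme $(X,S)$ consists of a non-empty finite set $X$ and a partition $S$ of $X\times X$ such that: $1_X:=\{(\alpha,\alpha)\mid \alpha\in X\}\in S$; for each $s\in S$, $s^*:=\{(\alpha,\beta)\mid(\beta,\alpha)\in s\}\in S$; and for all $s,t,u\in S$ the number $|\alpha s\cap \beta t^*|$ is constant for $(\alpha,\beta)\in u$, where $\alpha s:=\{\beta\mid(\alpha,\beta)\in s\}$. Its order is $|X|$. $\mathbb{F}_2$ is the field with two elements, and $x_{ab}$ denotes the element $(x,a,b)$ of $X\times\mathbb{F}_2\times\mathbb{F}_2$. For a matrix $H$ indexed by $X$, let $H^{T(0)}=H$ and $H^{T(1)}=H^T$ (transpose), and let $\delta_{ac}=1$ if $a=c$ and $0$ otherwise. Define $\widetilde X=\{x_{ab}\mid x\in X,\ a,b\in\mathbb{F}_2\}$; $\widetilde t=\{(x_{ab},x_{a(b+1)})\mid x\in X,\ a,b\in\mathbb{F}_2\}$; for $s\in S\setminus\{1_X\}$, $\widetilde s=\{(x_{ab},y_{ac})\mid (x,y)\in s,\ a,b,c\in\mathbb{F}_2\}$; $r^1_H=\{(x_{ab},y_{cd})\mid x,y\in X,\ a,b,c,d\in\mathbb{F}_2,\ (1-\delta_{ac})(H^{T(a)})_{xy}=(-1)^{b+d}\}$; $r^{-1}_H=\{(x_{ab},y_{cd})\mid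 x,y\in X,\ a,b,c,d\in\mathbb{F}_2,\ a\ne c\}\setminus r^1_H$; $S(H)=\{1_{\widetilde X},\widetilde t\}\cup\{\widetilde s\mid s\in S\setminus\{1_X\}\}\cup\{r^1_H,r^{-1}_H\}$. *)

From HB Require Import structures.
From mathcomp Require Import all_boot all_order all_algebra.
Set Implicit Arguments. Unset Strict Implicit. Unset Printing Implicit Defensive.
Import Order.TTheory GRing.Theory Num.Theory.
Local Open Scope ring_scope.

Section Scheme.
Variable X : finType.

Definition diagX : {set X * X} := [set p | p.1 == p.2].

Definition transp (s : {set X * X}) : {set X * X} :=
  [set p | (p.2, p.1) \in s].

Definition nbhd (s : {set X * X}) (a : X) : {set X} := [set b | (a, b) \in s].

Definition is_assoc_scheme (S : {set {set X * X}}) : Prop :=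
  [/\ partition S [set: X * X],
      diagX \in S,
      (forall s, s \in S -> transp s \in S) &
      (forall s t u, s \in S -> t \in S -> u \in S ->
         exists c : nat, forall a b, (a, b) \in u ->
           #|nbhd s a :&: nbhd (transp t) b| = c)].

Definition is_hadamard (H : X -> X -> int) : Prop :=
  (forall x y, H x y = 1 \/ H x y = -1) /\
  (forall x y, \sum_(z : X) H x z * H y z = ((x == y)%:R * #|X|%:R)%R).

(* F_2 is represented by bool, with + being addb (xor). x_{ab} = (x,a,b). *)
Definition tX := (X * bool * bool)%type.

Definition HT (H : X -> X -> int) (a : bool) (x y : X) : int :=
  if a then H y x else H x y.

Definition tdiag : {set tX * tX} := [set p | p.1 == p.2].

Definition t_rel : {set tX * tX} :=
  [set p | let: ((x, a, b), (y, c, d)) := p in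
           [&& y == x, c == a & d == addb b true]].

Definition tilde_rel (s : {set X * X}) : {set tX * tX} :=
  [set p | let: ((x, a, b), (y, c, d)) := p in ((x, y) \in s) && (c == a)].

Definition r1 (H : X -> X -> int) : {set tX * tX} :=
  [set p | let: ((x, a, b), (y, c, d)) := p in
     (1 - (a == c)%:R) * HT H a x y == (-1) ^+ (addb b d)].

Definition rm1 (H : X -> X -> int) : {set tX * tX} :=
  [set p | let: ((x, a, b), (y, c, d)) := p in a != c] :\: r1 H.

Definition SH (S : {set {set X * X}}) (H : X -> X -> int) : {set {set tX * tX}} :=
  [set tdiag; t_rel; r1 H; rm1 H] :|: [set tilde_rel s | s in S :\ diagX].

End Scheme.

From HB Require Import structures.
From mathcomp Require Import all_boot all_order all_algebra zify.
Import Order.TTheory GRing.Theory Num.Theory.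
Set Implicit Arguments. Unset Strict Implicit.
Local Open Scope ring_scope.

(* Every relation of S(H) has one of three shapes: a shift relation
   {(x_ab, x_a(b+e))} (this is 1 or t~), a cross relation
   {(x_ab, y_cd) | a <> c, H^T(a)_xy = (-1)^(b+d+e)} (this is r^1_H or r^-1_H),
   or the lift s~ of a nondiagonal class s of S.  These shapes are closed under
   transposition and partition X~ x X~, so only the intersection numbers need
   work.  Composing with a shift relation merely flips a bit, so the count is a
   membership indicator.  Two lifts compose to twice an intersection number of S
   (the middle bit is free), a lift and a cross relation to a valency of S, and
   two cross relations compare the sign patterns of two rows of H or of H^T:
   the count is 0 or |X| on equal rows and, by orthogonality, |X|/2 on distinct
   ones.  Orthogonality of the columns of H holds because a one-sided inverse of
   a square matrix is two-sided. *)

Lemma sum_enum_val (X : finType) (R : nmodType) (F : X -> R) :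
  \sum_(i < #|X|) F (enum_val i) = \sum_z F z.
Proof. by rewrite -big_enum_val. Qed.

Lemma sum_nat_card (I : finType) (P : pred I) :
  (\sum_i (P i : nat) = #|[set i | P i]|)%N.
Proof.
rewrite -sum1dep_card [RHS]big_mkcond; apply: eq_bigr => i _; by case: (P i).
Qed.

Lemma card_set1I (I : finType) (x : I) (A : {set I}) : #|[set x] :&: A| = (x \in A).
Proof.
have [xA|xNA] := boolP (x \in A); first by rewrite (setIidPl _) ?cards1 ?sub1set.
by apply/eqP; rewrite cards_eq0 setI_eq0 disjoints1.
Qed.

Lemma transpK (X : finType) : involutive (@transp X).
Proof. by move=> v; apply/setP => -[x y]; rewrite !inE. Qed.

Section Hadamard.
Variable X : finType.
Implicit Types (H : X -> X -> int) (f g : X -> int).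

Definition signbit (h : int) : bool := h == -1.

Lemma signbit_exp (h : int) (k : bool) :
  h = 1 \/ h = -1 -> (h == (-1) ^+ k) = (signbit h == k).
Proof. by case: k => -[] ->. Qed.

Lemma hadamard_tr H : is_hadamard H -> is_hadamard (fun x y => H y x).
Proof.
case=> Hpm Hrow; split=> [x y|x y]; first exact: Hpm.
pose n := #|X|.
have n_neq0 : (n%:R : rat) != 0 by rewrite pnatr_eq0 -lt0n; apply/card_gt0P; exists x.
pose M : 'M[rat]_n := \matrix_(i, j) (H (enum_val i) (enum_val j))%:~R.
have sum_enum (F : X -> X -> int) (i j : 'I_n) :
    \sum_(k < n) (F (enum_val i) (enum_val k) * F (enum_val j) (enum_val k))%:~R
    = (\sum_z F (enum_val i) z * F (enum_val j) z)%:~R :> rat.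
  rewrite rmorph_sum /=.
  exact: (sum_enum_val (fun z => (F (enum_val i) z * F (enum_val j) z)%:~R)).
have MMt : (n%:R^-1 *: M) *m M^T = 1%:M.
  apply/matrixP => i j; rewrite -scalemxAl !mxE.
  under eq_bigr do rewrite !mxE -intrM.
  rewrite sum_enum Hrow (inj_eq enum_val_inj) rmorphM /= !mulrz_nat.
  by rewrite mulrCA mulVf // mulr1; case: eqP.
have := congr1 (fun A : 'M[rat]_n => A (enum_rank x) (enum_rank y)) (mulmx1C MMt).
rewrite -scalemxAr !mxE.
under eq_bigr do rewrite !mxE -intrM.
rewrite (sum_enum (fun u v => H v u)) !enum_rankK (inj_eq enum_rank_inj) => Hcol.
apply: (@intr_inj rat); rewrite rmorphM /= !mulrz_nat.
by rewrite -Hcol mulrAC mulVf ?mul1r.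
Qed.

Lemma card_signbit_addb f g (k : bool) :
  (forall z, f z = 1 \/ f z = -1) -> (forall z, g z = 1 \/ g z = -1) ->
  \sum_z f z * g z = 0 ->
  #|[set z | addb (signbit (f z)) (signbit (g z)) == k]|.*2 = #|X|.
Proof.
move=> fpm gpm fg0.
set D := [set z | addb (signbit (f z)) (signbit (g z))].
have prodE z : f z * g z = 1 - (if z \in D then 2 else 0).
  by rewrite inE; case: (fpm z) => ->; case: (gpm z) => ->.
have cardD : (#|D|.*2 = #|X|)%N.
  move: fg0; under eq_bigr do rewrite prodE.
  rewrite sumrB -big_mkcond /= !sumr_const.
  by rewrite -[#|xpredT|]/#|X| => h; lia.
case: k.
  by rewrite -cardD; congr _.*2; apply: eq_card => z; rewrite !inE eqb_id.
rewrite (eq_card (B := ~: D)); last by move=> z; rewrite !inE eqbF_neg.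
by move: cardD (cardsC D); rewrite -!muln2; lia.
Qed.

End Hadamard.

Section SchemeFacts.
Variables (X : finType) (S : {set {set X * X}}).
Hypothesis schemeS : is_assoc_scheme S.

Lemma scheme_diag : diagX X \in S.
Proof. by case: schemeS. Qed.

Lemma scheme_transp v : v \in S -> transp v \in S.
Proof. by case: schemeS => _ _ trS _; apply: trS. Qed.

Lemma scheme_cover p : exists2 v, v \in S & p \in v.
Proof.
case: schemeS => /and3P[/eqP coverS _ _] _ _ _.
have : p \in cover S by rewrite coverS inE.
by case/bigcupP => v Sv pv; exists v.
Qed.

Lemma scheme_class_eq v w p : v \in S -> w \in S -> p \in v -> p \in w -> v = w.
Proof.
case: schemeS => /and3P[_ trivS _] _ _ _ Sv Sw pv pw.
apply/eqP; apply: contraT => v_neq_w.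
have /setP/(_ p) := disjoint_setI0 (trivIsetP trivS v w Sv Sw v_neq_w).
by rewrite !inE pv pw.
Qed.

Lemma scheme_class_nonempty v : v \in S -> exists p, p \in v.
Proof.
case: schemeS => /and3P[_ _ S_no0] _ _ _ Sv.
have /set0Pn[p pv] : v != set0 by apply: contraNneq S_no0 => <-.
by exists p.
Qed.

Lemma scheme_irrefl v x : v \in S :\ diagX X -> (x, x) \notin v.
Proof.
rewrite !inE => /andP[v_neq_diag Sv]; apply: contra v_neq_diag => xxv.
by apply/eqP; apply: scheme_class_eq Sv scheme_diag xxv _; rewrite inE.
Qed.

Lemma scheme_intersection v1 v2 w : v1 \in S -> v2 \in S -> w \in S ->
  exists c, forall x y, (x, y) \in w ->
    #|[set z | ((x, z) \in v1) && ((z, y) \in v2)]| = c.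
Proof.
case: schemeS => _ _ _ inter Sv1 Sv2 Sw.
have [c Hc] := inter _ _ _ Sv1 Sv2 Sw.
exists c => x y xyw; rewrite -(Hc x y xyw).
by apply: eq_card => z; rewrite !inE.
Qed.

Lemma scheme_out_valency v : v \in S ->
  exists k, forall x, #|[set z | (x, z) \in v]| = k.
Proof.
move=> Sv; have [c Hc] := scheme_intersection Sv (scheme_transp Sv) scheme_diag.
exists c => x; rewrite -(Hc x x) ?inE //.
by apply: eq_card => z; rewrite !inE /= andbb.
Qed.

Lemma scheme_in_valency v : v \in S ->
  exists k, forall y, #|[set z | (z, y) \in v]| = k.
Proof.
move=> Sv; have [c Hc] := scheme_intersection (scheme_transp Sv) Sv scheme_diag.
exists c => y; rewrite -(Hc y y) ?inE //.
by apply: eq_card => z; rewrite !inE /= andbb.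
Qed.

End SchemeFacts.

Section Doubling.
Variables (X : finType) (S : {set {set X * X}}) (H : X -> X -> int).
Hypothesis schemeS : is_assoc_scheme S.
Hypothesis hadH : is_hadamard H.
Hypothesis X_gt0 : (0 < #|X|)%N.

Local Notation T := (tX X).

Definition shift_rel (e : bool) : {set T * T} :=
  [set p | let: ((x, a, b), (y, c, d)) := p in
           [&& y == x, c == a & d == addb b e]].

Definition cross_rel (e : bool) : {set T * T} :=
  [set p | let: ((x, a, b), (y, c, d)) := p in
           (a != c) && (signbit (HT H a x y) == addb (addb b d) e)].

Lemma HT_sign a x y : HT H a x y = 1 \/ HT H a x y = -1.
Proof. by case: a; apply: hadH.1. Qed.

Lemma HT_orthogonal a x y :
  \sum_z HT H a x z * HT H a y z = (x == y)%:R * #|X|%:R.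
Proof. by case: a; [apply: (hadamard_tr hadH).2 | apply: hadH.2]. Qed.

Lemma tdiag_shift : tdiag X = shift_rel false.
Proof.
apply/setP => -[[[x a] b] [[y c] d]]; rewrite !inE /= addbF !xpair_eqE.
by rewrite (eq_sym x) (eq_sym a) (eq_sym b) andbA.
Qed.

Lemma t_rel_shift : t_rel X = shift_rel true.
Proof. by []. Qed.

Lemma r1_cross : r1 H = cross_rel false.
Proof.
apply/setP => -[[[x a] b] [[y c] d]]; rewrite !inE /= addbF.
have [_|a_neq_c] := eqVneq a c; first by rewrite subrr mul0r; case: addb.
by rewrite subr0 mul1r signbit_exp //; apply: HT_sign.
Qed.

Lemma rm1_cross : rm1 H = cross_rel true.
Proof.
apply/setP => -[[[x a] b] [[y c] d]]; rewrite !inE /=.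
have [_|a_neq_c] := eqVneq a c; first by rewrite andbF.
rewrite subr0 mul1r signbit_exp ?andbT; last exact: HT_sign.
by case: signbit; case: addb.
Qed.

Definition SH_shape (R : {set T * T}) : Prop :=
  [\/ exists e, R = shift_rel e, exists e, R = cross_rel e |
      exists2 v, v \in S :\ diagX X & R = tilde_rel v].

Lemma mem_SH R : R \in SH S H <-> SH_shape R.
Proof.
split.
  rewrite /SH !inE -!orbA tdiag_shift t_rel_shift r1_cross rm1_cross.
  move=> /orP[/eqP->|/orP[/eqP->|/orP[/eqP->|/orP[/eqP->|/imsetP[v Sv ->]]]]];
    by [apply: Or31; eexists | apply: Or32; eexists | apply: Or33; exists v].
case=> [[[] ->]|[[] ->]|[v Sv ->]];
  rewrite /SH !inE -?tdiag_shift -?t_rel_shift -?r1_cross -?rm1_cross ?eqxx ?orbT //.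
by apply/orP; right; apply/imsetP; exists v.
Qed.

Lemma SH_shape_eq A B p : SH_shape A -> SH_shape B -> p \in A -> p \in B -> A = B.
Proof.
case: p => -[[x a] b] [[y c] d].
case=> [[e ->]|[e ->]|[v Sv ->]]; case=> [[e' ->]|[e' ->]|[w Sw ->]]; rewrite !inE /=.
- by case/and3P => _ _ /eqP-> /and3P[_ _ /eqP/(congr1 (addb b))]; rewrite !addKb => ->.
- by case/and3P => _ /eqP-> _; rewrite eqxx.
- case/and3P => /eqP-> _ _ /andP[xxw _].
  by rewrite (negPf (scheme_irrefl schemeS x Sw)) in xxw.
- by case/andP => /negPf a_neq_c _ /and3P[_ /eqP c_eq _]; rewrite c_eq eqxx in a_neq_c.
- case/andP => _ /eqP-> /andP[_ /eqP/(congr1 (addb (addb b d)))].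
  by rewrite !addKb => ->.
- by case/andP => /negPf a_neq_c _ /andP[_ /eqP c_eq]; rewrite c_eq eqxx in a_neq_c.
- case/andP => + _ /and3P[/eqP y_eq _ _].
  by rewrite y_eq (negPf (scheme_irrefl schemeS x Sv)).
- by case/andP => _ /eqP c_eq /andP[/negPf a_neq_c _]; rewrite c_eq eqxx in a_neq_c.
- case/andP => xyv _ /andP[xyw _].
  move: Sv Sw; rewrite !inE => /andP[_ Sv] /andP[_ Sw].
  by rewrite (scheme_class_eq schemeS Sv Sw xyv xyw).
Qed.

Lemma SH_shape_nonempty R : SH_shape R -> exists p, p \in R.
Proof.
have [x0 _] : exists x0 : X, x0 \in X by apply/card_gt0P.
case=> [[e ->]|[e ->]|[v Sv ->]].
- by exists ((x0, false, false), (x0, false, e)); rewrite !inE /= !eqxx.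
- exists ((x0, false, false), (x0, true, addb (signbit (HT H false x0 x0)) e)).
  by rewrite !inE /=; case: signbit; case: e.
- move: Sv; rewrite inE => /andP[_ /(scheme_class_nonempty schemeS)[[x y] xyv]].
  by exists ((x, false, false), (y, false, false)); rewrite !inE /= xyv.
Qed.

Lemma SH_shape_transp R : SH_shape R -> SH_shape (transp R).
Proof.
case=> [[e ->]|[e ->]|[v Sv ->]].
- apply: Or31; exists e; apply/setP => -[[[x a] b] [[y c] d]]; rewrite !inE /=.
  by rewrite (eq_sym x) (eq_sym a); case: b; case: d; case: e.
- apply: Or32; exists e; apply/setP => -[[[x a] b] [[y c] d]]; rewrite !inE /=.
  by case: a; case: c; rewrite /HT //= (addbC d).
- apply: Or33; exists (transp v); last first.
    by apply/setP => -[[[x a] b] [[y c] d]]; rewrite !inE /= eq_sym.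
  move: Sv; rewrite !inE => /andP[v_neq_diag Sv]; rewrite scheme_transp // andbT.
  apply: contra v_neq_diag => /eqP vT_diag; apply/eqP.
  by rewrite -(transpK v) vT_diag; apply/setP => -[x y]; rewrite !inE eq_sym.
Qed.

Lemma SH_shape_shift e R : SH_shape R -> exists2 R', SH_shape R' &
  forall x a b y c d,
    (((x, a, addb b e), (y, c, d)) \in R) = (((x, a, b), (y, c, d)) \in R') /\
    (((x, a, b), (y, c, addb d e)) \in R) = (((x, a, b), (y, c, d)) \in R').
Proof.
case=> [[e' ->]|[e' ->]|[v Sv ->]].
- exists (shift_rel (addb e' e)); first by apply: Or31; eexists.
  by move=> x a b y c d; rewrite !inE /=; split; case: b; case: d; case: e; case: e'.
- exists (cross_rel (addb e' e)); first by apply: Or32; eexists.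
  move=> x a b y c d; rewrite !inE /=.
  by split; case: signbit; case: b; case: d; case: e; case: e'.
- by exists (tilde_rel v) => [|x a b y c d]; [apply: Or33; exists v | rewrite !inE].
Qed.

Definition inter_count (s t : {set T * T}) (p : T * T) : nat :=
  #|nbhd s p.1 :&: nbhd (transp t) p.2|.

Definition constant_on (F : T * T -> nat) (u : {set T * T}) : Prop :=
  exists c, forall p, p \in u -> F p = c.

Lemma inter_count_sum s t x a b y c d :
  inter_count s t ((x, a, b), (y, c, d)) =
  (\sum_z \sum_(a' : bool) \sum_(b' : bool)
     ((((x, a, b), (z, a', b')) \in s) && (((z, a', b'), (y, c, d)) \in t)))%N.
Proof.
rewrite pair_bigA pair_bigA sum_nat_card; apply: eq_card => -[[z a'] b'].
by rewrite !inE.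
Qed.

Lemma inter_count_shiftl e t x a b q :
  inter_count (shift_rel e) t ((x, a, b), q) = (((x, a, addb b e), q) \in t).
Proof.
rewrite /inter_count /=.
have -> : nbhd (shift_rel e) (x, a, b) = [set (x, a, addb b e)].
  by apply/setP => -[[z a1] b1]; rewrite !inE /= !xpair_eqE -!andbA.
by rewrite card_set1I !inE.
Qed.

Lemma inter_count_shiftr e s q y c d :
  inter_count s (shift_rel e) (q, (y, c, d)) = ((q, (y, c, addb d e)) \in s).
Proof.
rewrite /inter_count /= setIC.
have -> : nbhd (transp (shift_rel e)) (y, c, d) = [set (y, c, addb d e)].
  apply/setP => -[[z a1] b1]; rewrite !inE /= !xpair_eqE -!andbA (eq_sym y) (eq_sym c).
  by case: b1; case: d; case: e.
by rewrite card_set1I inE.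
Qed.

Ltac case_atoms := repeat match goal with
  | |- context [signbit ?t] => case: (signbit t)
  | |- context [(?p \in ?v)] => case: (p \in v)
  end.

Lemma inter_count_lift_lift v1 v2 x a b y c d :
  inter_count (tilde_rel v1) (tilde_rel v2) ((x, a, b), (y, c, d)) =
  ((c == a) * 2 * #|[set z | ((x, z) \in v1) && ((z, y) \in v2)]|)%N.
Proof.
rewrite inter_count_sum -sum_nat_card big_distrr /=; apply: eq_bigr => z _.
by rewrite !big_bool /= !inE /=; case: a; case: c; case_atoms.
Qed.

Lemma inter_count_lift_cross v e x a b y c d :
  inter_count (tilde_rel v) (cross_rel e) ((x, a, b), (y, c, d)) =
  ((a != c) * #|[set z | (x, z) \in v]|)%N.
Proof.
rewrite inter_count_sum -sum_nat_card big_distrr /=; apply: eq_bigr => z _.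
rewrite !big_bool /= !inE /=.
by case: a; case: c; rewrite /HT; case_atoms; case: d; case: e.
Qed.

Lemma inter_count_cross_lift v e x a b y c d :
  inter_count (cross_rel e) (tilde_rel v) ((x, a, b), (y, c, d)) =
  ((a != c) * #|[set z | (z, y) \in v]|)%N.
Proof.
rewrite inter_count_sum -sum_nat_card big_distrr /=; apply: eq_bigr => z _.
rewrite !big_bool /= !inE /=.
by case: a; case: c; rewrite /HT; case_atoms; case: b; case: e.
Qed.

Lemma inter_count_cross_cross e e' x a b y c d :
  inter_count (cross_rel e) (cross_rel e') ((x, a, b), (y, c, d)) =
  ((a == c) * #|[set z | addb (signbit (HT H a x z)) (signbit (HT H a y z)) ==
                         addb (addb b d) (addb e e')]|)%N.
Proof.
rewrite inter_count_sum -sum_nat_card big_distrr /=; apply: eq_bigr => z _.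
rewrite !big_bool /= !inE /=; case: a; case: c; rewrite /HT; case_atoms;
  by case: b; case: d; case: e; case: e'.
Qed.

Lemma constant_on_mem R u : SH_shape R -> SH_shape u ->
  constant_on (fun p => (p \in R : nat)) u.
Proof.
move=> shR shu; exists (R == u) => p pu.
have [->|R_neq_u] := eqVneq R u; first by rewrite pu.
have [pR|//] := boolP (p \in R).
by case/eqP: R_neq_u; apply: SH_shape_eq shR shu pR pu.
Qed.

Lemma constant_on_shiftl e t u : SH_shape t -> SH_shape u ->
  constant_on (inter_count (shift_rel e) t) u.
Proof.
move=> sht shu; have [t' sht' t'E] := SH_shape_shift e sht.
have [k Hk] := constant_on_mem sht' shu.
exists k => -[[[x a] b] [[y c] d]] pu.
by rewrite inter_count_shiftl (t'E x a b y c d).1 Hk.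
Qed.

Lemma constant_on_shiftr e s u : SH_shape s -> SH_shape u ->
  constant_on (inter_count s (shift_rel e)) u.
Proof.
move=> shs shu; have [s' shs' s'E] := SH_shape_shift e shs.
have [k Hk] := constant_on_mem shs' shu.
exists k => -[[[x a] b] [[y c] d]] pu.
by rewrite inter_count_shiftr (s'E x a b y c d).2 Hk.
Qed.

Lemma constant_on_cross_cross e e' u : SH_shape u ->
  constant_on (inter_count (cross_rel e) (cross_rel e')) u.
Proof.
case=> [[e'' ->]|[e'' ->]|[w Sw ->]].
- exists #|[set z : X | false == addb e'' (addb e e')]| => -[[[x a] b] [[y c] d]].
  rewrite !inE /= => /and3P[/eqP-> /eqP-> /eqP->].
  rewrite inter_count_cross_cross eqxx mul1n; apply: eq_card => z; rewrite !inE addbb.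
  by case: b; case: e; case: e'; case: e''.
- exists 0%N => -[[[x a] b] [[y c] d]].
  by rewrite !inE /= inter_count_cross_cross => /andP[/negPf ->].
- exists (#|X| %/ 2)%N => -[[[x a] b] [[y c] d]].
  rewrite !inE /= inter_count_cross_cross => /andP[xyw /eqP->]; rewrite eqxx mul1n.
  have x_neq_y : x != y.
    by apply: contraTneq xyw => ->; rewrite (negPf (scheme_irrefl schemeS y Sw)).
  have := card_signbit_addb (addb (addb b d) (addb e e')) (HT_sign a x) (HT_sign a y).
  rewrite HT_orthogonal (negPf x_neq_y) mul0r => /(_ erefl) <-.
  by rewrite -muln2 mulnK.
Qed.

Lemma constant_on_lift_cross v e u : v \in S -> SH_shape u ->
  constant_on (inter_count (tilde_rel v) (cross_rel e)) u.
Proof.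
move=> Sv; case=> [[e' ->]|[e' ->]|[w Sw ->]].
- exists 0%N => -[[[x a] b] [[y c] d]].
  by rewrite !inE /= inter_count_lift_cross => /and3P[_ /eqP-> _]; rewrite eqxx.
- have [k Hk] := scheme_out_valency schemeS Sv.
  exists k => -[[[x a] b] [[y c] d]].
  by rewrite !inE /= inter_count_lift_cross => /andP[-> _]; rewrite Hk mul1n.
- exists 0%N => -[[[x a] b] [[y c] d]].
  by rewrite !inE /= inter_count_lift_cross => /andP[_ /eqP->]; rewrite eqxx.
Qed.

Lemma constant_on_cross_lift v e u : v \in S -> SH_shape u ->
  constant_on (inter_count (cross_rel e) (tilde_rel v)) u.
Proof.
move=> Sv; case=> [[e' ->]|[e' ->]|[w Sw ->]].
- exists 0%N => -[[[x a] b] [[y c] d]].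
  by rewrite !inE /= inter_count_cross_lift => /and3P[_ /eqP-> _]; rewrite eqxx.
- have [k Hk] := scheme_in_valency schemeS Sv.
  exists k => -[[[x a] b] [[y c] d]].
  by rewrite !inE /= inter_count_cross_lift => /andP[-> _]; rewrite Hk mul1n.
- exists 0%N => -[[[x a] b] [[y c] d]].
  by rewrite !inE /= inter_count_cross_lift => /andP[_ /eqP->]; rewrite eqxx.
Qed.

Lemma constant_on_lift_lift v1 v2 u : v1 \in S -> v2 \in S -> SH_shape u ->
  constant_on (inter_count (tilde_rel v1) (tilde_rel v2)) u.
Proof.
move=> Sv1 Sv2; case=> [[e ->]|[e ->]|[w Sw ->]].
- have [k Hk] := scheme_intersection schemeS Sv1 Sv2 (scheme_diag schemeS).
  exists (2 * k)%N => -[[[x a] b] [[y c] d]].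
  rewrite !inE /= inter_count_lift_lift => /and3P[/eqP-> /eqP-> _].
  by rewrite eqxx mul1n Hk // inE.
- exists 0%N => -[[[x a] b] [[y c] d]].
  by rewrite !inE /= inter_count_lift_lift eq_sym => /andP[/negPf->].
- move: Sw; rewrite inE => /andP[_ Sw].
  have [k Hk] := scheme_intersection schemeS Sv1 Sv2 Sw.
  exists (2 * k)%N => -[[[x a] b] [[y c] d]].
  by rewrite !inE /= inter_count_lift_lift => /andP[xyw /eqP->]; rewrite eqxx mul1n Hk.
Qed.

Lemma SH_shape_inter_count s t u : SH_shape s -> SH_shape t -> SH_shape u ->
  constant_on (inter_count s t) u.
Proof.
have inS v : v \in S :\ diagX X -> v \in S by rewrite inE => /andP[].
move=> shs sht shu; case: shs => [[e ->]|[e ->]|[v Sv ->]].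
- exact: constant_on_shiftl.
- case: sht => [[e' ->]|[e' ->]|[w Sw ->]].
  + by apply: constant_on_shiftr => //; apply: Or32; exists e.
  + exact: constant_on_cross_cross.
  + exact: constant_on_cross_lift (inS _ Sw) shu.
- case: sht => [[e' ->]|[e' ->]|[w Sw ->]].
  + by apply: constant_on_shiftr => //; apply: Or33; exists v.
  + exact: constant_on_lift_cross (inS _ Sv) shu.
  + exact: constant_on_lift_lift (inS _ Sv) (inS _ Sw) shu.
Qed.

Lemma SH_shape_cover p : exists2 R, SH_shape R & p \in R.
Proof.
case: p => -[[x a] b] [[y c] d].
have [<-|a_neq_c] := eqVneq a c.
  have [<-|x_neq_y] := eqVneq x y.
    exists (shift_rel (addb b d)); first by apply: Or31; eexists.
    by rewrite !inE /= addKb !eqxx.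
  have [v Sv xyv] := scheme_cover schemeS (x, y).
  exists (tilde_rel v); last by rewrite !inE /= xyv eqxx.
  apply: Or33; exists v => //; rewrite !inE Sv andbT.
  by apply: contraNneq x_neq_y => v_diag; move: xyv; rewrite v_diag inE.
exists (cross_rel (addb (signbit (HT H a x y)) (addb b d))).
  by apply: Or32; eexists.
by rewrite !inE /= a_neq_c addbCA addbb addbF eqxx.
Qed.

Lemma SH_partition : partition (SH S H) [set: T * T].
Proof.
apply/and3P; split.
- apply/eqP/setP => p; rewrite in_setT; apply/bigcupP.
  by have [R shR pR] := SH_shape_cover p; exists R => //; apply/mem_SH.
- apply/trivIsetP => A B /mem_SH shA /mem_SH shB A_neq_B.
  rewrite -setI_eq0; apply/eqP/setP => p; rewrite !inE; apply/negP => /andP[pA pB].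
  by case/eqP: A_neq_B; apply: SH_shape_eq shA shB pA pB.
- by apply/negP => /mem_SH /SH_shape_nonempty[p]; rewrite inE.
Qed.

End Doubling.

Theorem theorem1p1 (X : finType) (S : {set {set X * X}}) (H : X -> X -> int) :
  (1 < #|X|)%N -> is_assoc_scheme S -> is_hadamard H ->
  is_assoc_scheme (SH S H).
Proof.
move=> X_gt1 schemeS hadH.
have X_gt0 := ltnW X_gt1.
have shapeP := mem_SH S hadH.
split.
- exact: SH_partition schemeS hadH X_gt0.
- by rewrite /SH !inE eqxx.
- by move=> R /shapeP/(SH_shape_transp schemeS)/shapeP.
- move=> s t u /shapeP shs /shapeP sht /shapeP shu.
  have [c Hc] := SH_shape_inter_count schemeS hadH shs sht shu.
  by exists c => p q pqu; apply: Hc pqu.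
Qed.
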